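(* Let $p\ge 1$, $\sigma>0$, and let $H:\mathcal{H}\times\mathcal{X}^n\to\mathbb{R}$ be such that for every $h\in\mathcal{H}$ the random variable $H(h,\mathbf{X})$, $\mathbf{X}\sim\mu^n$, is $\sigma$-subgaussian. Let $Z(\mathbf{x})=\int_{\mathcal{H}}e^{H(h,\mathbf{x})}d\pi(h)$ (assumed finite and positive, with $\int_{\mathcal{H}}e^{\mathbb{E}[H(h,\mathbf{X})]}d\pi(h)$ finite and positive). Then: (i) $\ln\mathbb{E}\left[e^{p\left(-\ln Z(\mathbf{X})+\mathbb{E}[\ln Z(\mathbf{X}')]\right)}\right]\le p^2\sigma^2$. (ii) If $f:\mathcal{X}^n\to\mathbb{R}$ is such that $f(\mathbf{X})$ is $\rho$-subgaussian, then $$\ln\mathbb{E}\left[e^{p\left(f(\mathbf{X})-\mathbb{E}[f(\mathbf{X}')]-\ln Z(\mathbf{X})+\mathbb{E}[\ln Z(\mathbf{X}')]\right)}\right]\le p^2(\rho+\sigma)^2.$$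
   Context: $\mathcal{X}$ is a measurable space with probability measure $\mu$; $\mathbf{X}\sim\mu^n$ and $\mathbf{X}'$ is an independent copy. $\mathcal{H}$ is a measurable space with nonnegative measure $\pi$; $H$ is jointly measurable. A real random variable $Y$ is $\sigma$-subgaussian if $\mathbb{E}[e^{\lambda(Y-\mathbb{E}[Y])}]\le e^{\lambda^2\sigma^2/2}$ for every $\lambda\in\mathbb{R}$. All expectations appearing are assumed finite. *)

From HB Require Import structures.
From mathcomp Require Import all_boot all_order all_algebra.
From mathcomp Require Import all_classical all_reals all_analysis.
Set Implicit Arguments. Unset Strict Implicit. Unset Printing Implicit Defensive.
Import Order.TTheory GRing.Theory Num.Theory.
Local Open Scope classical_set_scope.
Local Open Scope ring_scope.

(* Measurable type of n-tuples over T is the library's (product sigma-algebra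
   generated by the coordinate maps). *)

(** [P] is the n-fold product probability measure [mu^n] on [n.-tuple X]:
    it agrees with the product of [mu] on measurable rectangles (this
    characterizes [mu^n] uniquely). *)
Definition is_product_prob {d} {X : measurableType d} {R : realType} (n : nat)
  (mu : probability X R) (P : probability (n.-tuple X) R) : Prop :=
  forall A : 'I_n -> set X, (forall i, measurable (A i)) ->
    P [set x : n.-tuple X | forall i, A i (tnth x i)] = (\prod_(i < n) mu (A i))%E.

(** real-valued mean E[Y] (meaningful when Y is integrable) *)
Definition mean {d} {T : measurableType d} {R : realType}
  (P : probability T R) (Y : T -> R) : R := fine ('E_P[Y])%E.

Definition subgaussian {d} {T : measurableType d} {R : realType}
  (P : probability T R) (Y : T -> R) (sigma : R) : Prop :=
  forall lam : R,
    ('E_P[fun x => expR (lam * (Y x - mean P Y))] <=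
      (expR (lam ^+ 2 * sigma ^+ 2 / 2))%:E)%E.

Definition Zpart {dH dT} {Hs : measurableType dH} {T : measurableType dT}
  {R : realType} (pi : {measure set Hs -> \bar R}) (H : Hs -> T -> R) (x : T)
  : \bar R := (\int[pi]_h (expR (H h x))%:E)%E.

From HB Require Import structures.
From mathcomp Require Import all_boot all_order all_algebra.
From mathcomp Require Import all_classical all_reals all_analysis.
From mathcomp Require Import measurable_realfun.
From mathcomp Require Import ring lra.
Set Implicit Arguments.
Unset Strict Implicit.
Unset Printing Implicit Defensive.
Import Order.TTheory GRing.Theory Num.Theory.
Local Open Scope classical_set_scope.
Local Open Scope ring_scope.

(* Let [Zbar := \int exp (E H(h, .)) dpi]. Fubini and the subgaussianity of each
   [H(h, .)] give [E \int exp (E H + q (H - E H)) dpi <= exp (q^2 sigma^2 / 2) Zbar]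
   for every real [q]. For [q = 1] this bounds [E Z], hence [E ln Z <= ln Zbar +
   sigma^2 / 2] by concavity of [ln]. For [q = - p], Jensen's inequality for
   [u |-> u ^ (- p)] under the Gibbs weights [exp (E H) / Zbar] bounds
   [E (Z / Zbar) ^ (- p)] by [exp (p^2 sigma^2 / 2)].
   Part (ii) follows from (i) and the subgaussianity of [f] by Hölder's inequality
   with exponents [(rho + sigma) / rho] and [(rho + sigma) / sigma]; the case
   [rho = 0] is the limit [rho -> 0]. *)

Section real_inequalities.
Variable R : realType.

Lemma expR_convex (t u v : R) : 0 <= t -> t <= 1 ->
  expR (t * u + (1 - t) * v) <= t * expR u + (1 - t) * expR v.
Proof. by move=> t0 t1; have := convex_expR (Itv01 t0 t1) u v; rewrite !convRE. Qed.

Lemma ln_le_tangent (y c : R) : 0 < y -> 0 < c -> ln y <= ln c + y / c - 1.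
Proof.
move=> y0 c0; have := expR_ge1Dx (ln (y / c)).
by rewrite lnK ?posrE ?divr_gt0 // ln_div ?posrE //; lra.
Qed.

Lemma expR_powN_tangent (q s y : R) : 0 <= q ->
  (1 + q) * expR (- q * s) <= expR (- q * y) + q * expR (- (1 + q) * s) * expR y.
Proof.
move=> q0; set w := y - s.
have mix : 1 + q <= expR (- q * w) + q * expR w.
  have := expR_ge1Dx (- q * w).
  have : q * (1 + w) <= q * expR w by rewrite ler_wpM2l ?expR_ge1Dx.
  lra.
have e1 : expR (- q * y) = expR (- q * s) * expR (- q * w).
  by rewrite -expRD /w; congr expR; ring.
have e2 : expR (- (1 + q) * s) * expR y = expR (- q * s) * expR w.
  by rewrite -!expRD /w; congr expR; ring.
rewrite e1 -[q * _ * _]mulrA e2 mulrCA -mulrDr mulrC ler_pM2l ?expR_gt0 //.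
Qed.

Lemma lee_expR_sqr_shift (E : \bar R) (k s : R) : 0 < k -> 0 <= s ->
  (forall r, 0 < r -> (E <= (expR (k * (r + s) ^+ 2))%:E)%E) ->
  (E <= (expR (k * s ^+ 2))%:E)%E.
Proof.
move=> k0 s0 hE; case: E hE => [e| |] hE; last by rewrite leNye.
- have [e0|e0] := leP e 0; first by rewrite lee_fin (le_trans e0) ?expR_ge0.
  rewrite lee_fin -ler_ln ?posrE ?expR_gt0 // expRK; apply/ler_addgt0Pr => eps eps0.
  have c0 : 0 < k * (1 + 2 * s) by rewrite mulr_gt0 //; lra.
  pose r := Num.min 1 (eps / (k * (1 + 2 * s))).
  have r0 : 0 < r by rewrite lt_min ltr01 divr_gt0.
  have r1 : r <= 1 by rewrite ge_min lexx.
  have r_eps : r * (k * (1 + 2 * s)) <= eps.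
    by rewrite -ler_pdivlMr // ge_min lexx orbT.
  have := hE r r0; rewrite lee_fin -ler_ln ?posrE ?expR_gt0 // expRK.
  have -> : k * (r + s) ^+ 2 = k * s ^+ 2 + k * r * (r + 2 * s) by ring.
  have : k * r * (r + 2 * s) <= k * r * (1 + 2 * s).
    by apply: ler_wpM2l; [rewrite mulr_ge0 ?ltW | lra].
  rewrite (_ : r * _ = k * r * (1 + 2 * s)) in r_eps; last by ring.
  lra.
- by have := hE 1 ltr01; rewrite leye_eq.
Qed.

End real_inequalities.

Lemma subgaussian_le d (T : measurableType d) (R : realType) (P : probability T R)
  (Y : T -> R) (s s' : R) :
  0 <= s -> s <= s' -> subgaussian P Y s -> subgaussian P Y s'.
Proof.
move=> s0 ss' hY lam; apply: le_trans (hY lam) _; rewrite lee_fin ler_expR.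
rewrite ler_pM2r // ler_wpM2l ?sqr_ge0 // lerXn2r // ?nnegrE //.
exact: le_trans ss'.
Qed.

Section expectation_inequalities.
Context d (T : measurableType d) (R : realType) (P : probability T R).

Let mexp (W : T -> R) : measurable_fun setT W ->
  measurable_fun setT (fun x => (expR (W x))%:E).
Proof. by move=> mW; apply/measurable_EFinP; exact: measurableT_comp. Qed.

(* Hölder's inequality for exponential moments, with exponents [1 / t] and
   [1 / (1 - t)]. *)
Lemma expectation_expR_mix_le (U V : T -> R) (t a b : R) : 0 <= t -> t <= 1 ->
  measurable_fun setT U -> measurable_fun setT V ->
  ('E_P[fun x => expR (U x)] <= (expR a)%:E)%E ->
  ('E_P[fun x => expR (V x)] <= (expR b)%:E)%E ->
  ('E_P[fun x => expR (t * U x + (1 - t) * V x)]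
     <= (expR (t * a + (1 - t) * b))%:E)%E.
Proof.
move=> t0 t1 mU mV; rewrite unlock => hU hV.
set g := t * a + (1 - t) * b.
have t1' : 0 <= 1 - t by rewrite subr_ge0.
have cU : (0 <= (t * expR (g - a))%:E)%E by rewrite lee_fin mulr_ge0 ?expR_ge0.
have cV : (0 <= ((1 - t) * expR (g - b))%:E)%E by rewrite lee_fin mulr_ge0 ?expR_ge0.
apply: (@le_trans _ _ (\int[P]_x ((t * expR (g - a))%:E * (expR (U x))%:E
    + ((1 - t) * expR (g - b))%:E * (expR (V x))%:E))%E).
  apply: ge0_le_integral => //.
  - by apply: mexp; apply: measurable_funD; apply: measurable_funM.
  - by apply: emeasurable_funD; apply: measurable_funeM; exact: mexp.
  move=> x _; rewrite -!EFinM -EFinD lee_fin.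
  rewrite [leRHS](_ : _ = expR g * (t * expR (U x - a) + (1 - t) * expR (V x - b))).
    rewrite (_ : _ * U x + _ = g + (t * (U x - a) + (1 - t) * (V x - b))); last by rewrite /g; ring.
    by rewrite [leLHS]expRD ler_pM2l ?expR_gt0 ?expR_convex.
  by rewrite !expRB; field; rewrite !gt_eqF ?expR_gt0.
rewrite ge0_integralD //; first last.
- by apply: measurable_funeM; exact: mexp.
- by move=> x _; rewrite mule_ge0 // lee_fin expR_ge0.
- by apply: measurable_funeM; exact: mexp.
- by move=> x _; rewrite mule_ge0 // lee_fin expR_ge0.
rewrite !ge0_integralZl_EFin ?mulr_ge0 ?expR_ge0 //; try exact: mexp.
apply: le_trans (leeD (lee_wpmul2l cU hU) (lee_wpmul2l cV hV)) _.
by rewrite -!EFinM -EFinD -!mulrA -!expRD !subrK -mulrDl subrKC mul1r.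
Qed.

Lemma expectation_expRD_cst (U : T -> R) (c : R) : measurable_fun setT U ->
  ('E_P[fun x => expR (U x + c)] = (expR c)%:E * 'E_P[fun x => expR (U x)])%E.
Proof.
move=> mU; rewrite unlock -ge0_integralZl_EFin ?expR_ge0 //; last exact: mexp.
by apply: eq_integral => x _; rewrite -EFinM expRD mulrC.
Qed.

Lemma expectation_ln_le (Y : T -> R) (c : R) : 0 < c -> (forall x, 0 < Y x) ->
  measurable_fun setT Y -> P.-integrable setT (fun x => (ln (Y x))%:E) ->
  (\int[P]_x (Y x)%:E <= c%:E)%E -> mean P (fun x => ln (Y x)) <= ln c.
Proof.
move=> c0 Y0 mY ilnY EY.
have iY : P.-integrable setT (fun x => (Y x)%:E).
  apply/integrableP; split; first exact/measurable_EFinP.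
  under eq_integral => x _ do rewrite gee0_abs ?lee_fin ?ltW //.
  exact: le_lt_trans EY (ltry _).
have icY : P.-integrable setT (fun x => (c^-1)%:E * (Y x)%:E)%E.
  exact: integrableZl.
have icst : P.-integrable setT (fun=> (ln c - 1)%:E).
  exact: finite_measure_integrable_cst.
have tangent x : ((ln (Y x))%:E <= (ln c - 1)%:E + (c^-1)%:E * (Y x)%:E)%E.
  by rewrite -EFinM -EFinD lee_fin mulrC; have := ln_le_tangent (Y0 x) c0; lra.
have := le_integral measurableT ilnY (integrableD measurableT icst icY).
rewrite integralD // integral_cst // integralZl //.
rewrite [X in ((_ - _)%:E * X)%E](_ : _ = 1%E) ?mule1; last exact: probability_setT.
move=> /(_ (fun x _ => tangent x)) hle.
rewrite -lee_fin /mean unlock fineK ?(integrable_fin_num measurableT ilnY) //.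
apply: le_trans hle _.
have hc : ((c^-1)%:E * \int[P]_x (Y x)%:E <= 1%:E)%E.
  apply: le_trans (lee_wpmul2l _ EY) _; first by rewrite lee_fin invr_ge0 ltW.
  by rewrite -EFinM mulVf ?gt_eqF.
by apply: le_trans (leeD2l _ hc) _; rewrite -EFinD lee_fin; lra.
Qed.

End expectation_inequalities.

Lemma sigma_finite_integrable_gt0 d (T : measurableType d) (R : realType)
  (mu : {measure set T -> \bar R}) (g : T -> R) :
  (forall x, 0 < g x) -> measurable_fun setT g ->
  (\int[mu]_x (g x)%:E < +oo)%E -> sigma_finite setT mu.
Proof.
move=> g0 mg gfin.
exists (fun k => setT `&` [set x | (k.+1%:R^-1)%:E <= `|(g x)%:E|])%E.
  apply/seteqP; split => [x _|//]; have [k hk] := ltr_add_invr (g0 x).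
  rewrite add0r in hk.
  by exists k => //; split => //=; rewrite lee_fin ger0_norm ltW // (lt_trans _ hk).
move=> k; split.
  by apply: emeasurable_fun_c_infty => //; apply: measurableT_comp => //; exact/measurable_EFinP.
have a0 : 0 < k.+1%:R^-1 :> R by rewrite invr_gt0.
have := le_integral_abse mu measurableT (proj2 (measurable_EFinP _ _) mg) a0.
have gfin' : (\int[mu]_x `|(EFin \o g) x| < +oo)%E.
  by under eq_integral => x _ do rewrite /= ger0_norm ?ltW //.
move=> /le_lt_trans /(_ gfin').
case: (mu _) => [r _| |//]; first exact: ltry.
by rewrite mulry gtr0_sg // mul1e.
Qed.

(* [mu] packaged as a sigma-finite measure, the form required by the
   Fubini-Tonelli lemmas. *)
Definition sigma_finite_measure_of d (T : measurableType d) (R : realType)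
  (mu : {measure set T -> \bar R}) (_ : sigma_finite setT mu) : set T -> \bar R := mu.

Section sigma_finite_measure_of.
Context d (T : measurableType d) (R : realType) (mu : {measure set T -> \bar R})
  (mu_sf : sigma_finite setT mu).
HB.instance Definition _ := Measure.on (sigma_finite_measure_of mu_sf).
HB.instance Definition _ :=
  Measure_isSigmaFinite.Build _ _ _ (sigma_finite_measure_of mu_sf) mu_sf.
End sigma_finite_measure_of.

Lemma measurable_mean_section d1 d2 (T1 : measurableType d1) (T2 : measurableType d2)
  (R : realType) (P : probability T2 R) (F : T1 * T2 -> R) :
  measurable_fun setT F -> measurable_fun setT (fun y => mean P (fun x => F (y, x))).
Proof.
move=> mF; pose f z := (F z)%:E.
have mf : measurable_fun setT f by exact/measurable_EFinP.
have mFp := measurable_fun_fubini_tonelli_F (m2 := P) _ (measurable_funepos mf)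
  (fun z => funepos_ge0 _ z).
have mFn := measurable_fun_fubini_tonelli_F (m2 := P) _ (measurable_funeneg mf)
  (fun z => funeneg_ge0 _ z).
rewrite (_ : (fun y => _) = fun y => fine (fubini_F P f^\+ y - fubini_F P f^\- y))%E.
  exact: measurableT_comp (fine_measurable measurableT) (emeasurable_funB mFp mFn).
apply: funext => y; rewrite /mean unlock integralE /fubini_F.
by congr (fine (_ - _)); apply: eq_integral => x _; rewrite !(funeposE, funenegE).
Qed.

(* Jensen's inequality for the convex map [u |-> u ^ (- q)] under the probability
   [w / W]: [(V / W) ^ (- q) <= \int w exp (- q g) / W]. It suffices to
   integrate the tangent line of that map at [u = V / W]. *)
Lemma jensen_expR_powN d (T : measurableType d) (R : realType)
  (mu : {measure set T -> \bar R}) (w g : T -> R) (W V q : R) :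
  0 <= q -> 0 < W -> 0 < V -> (forall x, 0 <= w x) ->
  measurable_fun setT w -> measurable_fun setT g ->
  (\int[mu]_x (w x)%:E = W%:E)%E -> (\int[mu]_x (w x * expR (g x))%:E = V%:E)%E ->
  ((W * expR (- q * ln (V / W)))%:E <= \int[mu]_x (w x * expR (- q * g x))%:E)%E.
Proof.
move=> q0 W0 V0 w0 mw mg intW intV; set s := ln (V / W).
have mexp (u : T -> R) : measurable_fun setT u ->
    measurable_fun setT (fun x => (w x * expR (u x))%:E).
  move=> m_u; apply/measurable_EFinP; apply: measurable_funM => //.
  exact: measurableT_comp.
have c0 : 0 <= (1 + q) * expR (- q * s) by rewrite mulr_ge0 ?expR_ge0 //; lra.
have c1 : 0 <= q * expR (- (1 + q) * s) by rewrite mulr_ge0 ?expR_ge0.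
have tangent x : (((1 + q) * expR (- q * s))%:E * (w x)%:E <=
    (w x * expR (- q * g x))%:E + (q * expR (- (1 + q) * s))%:E * (w x * expR (g x))%:E)%E.
  rewrite -!EFinM -EFinD lee_fin mulrC.
  rewrite [leRHS](_ : _ = w x * (expR (- q * g x)
    + q * expR (- (1 + q) * s) * expR (g x))); last by ring.
  by apply: ler_wpM2l => //; exact: expR_powN_tangent.
have : (\int[mu]_x (((1 + q) * expR (- q * s))%:E * (w x)%:E) <=
    \int[mu]_x ((w x * expR (- q * g x))%:E
      + (q * expR (- (1 + q) * s))%:E * (w x * expR (g x))%:E))%E.
  apply: ge0_le_integral => //.
  - by move=> x _; rewrite mule_ge0 ?lee_fin.
  - by apply: measurable_funeM; exact/measurable_EFinP.
  - apply: emeasurable_funD; last apply: measurable_funeM.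
      by apply: mexp; apply: measurable_funM.
    exact: mexp.
have w_ge0 x : (0 <= (w x)%:E)%E by rewrite lee_fin.
rewrite ge0_integralZl_EFin //; last exact/measurable_EFinP.
rewrite ge0_integralD //; last 4 first.
- by move=> x _; rewrite lee_fin mulr_ge0 ?expR_ge0.
- by apply: mexp; apply: measurable_funM.
- by move=> x _; rewrite mule_ge0 ?lee_fin ?mulr_ge0 ?expR_ge0.
- by apply: measurable_funeM; exact: mexp.
rewrite ge0_integralZl_EFin //; first last.
- exact: mexp.
- by move=> x _; rewrite lee_fin mulr_ge0 ?expR_ge0.
rewrite intW intV -!EFinM.
have -> : q * expR (- (1 + q) * s) * V = q * (W * expR (- q * s)).
  rewrite (_ : - (1 + q) * s = - q * s + - s); last by ring.
  by rewrite expRD expRN /s lnK ?posrE ?divr_gt0 // invf_div; field; rewrite gt_eqF.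
rewrite (_ : (1 + q) * expR (- q * s) * W = W * expR (- q * s) + q * (W * expR (- q * s))).
  by rewrite EFinD leeD2rE.
by ring.
Qed.

Section log_partition_function.
Context (R : realType) (dT dH : measure_display) (T : measurableType dT)
  (P : probability T R) (Hs : measurableType dH) (pi : {measure set Hs -> \bar R})
  (H : Hs -> T -> R) (sigma : R).
Hypothesis mH : measurable_fun setT (fun z : Hs * T => H z.1 z.2).
Hypothesis iH : forall h, P.-integrable setT (fun x => (H h x)%:E).
Hypothesis sgH : forall h, subgaussian P (H h) sigma.
Hypothesis Z_bounds : forall x, (0 < Zpart pi H x < +oo)%E.
Hypothesis Zbar_bounds : (0 < \int[pi]_h (expR (mean P (H h)))%:E < +oo)%E.
Hypothesis ilnZ : P.-integrable setT (fun x => (ln (fine (Zpart pi H x)))%:E).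

Let Z x := fine (Zpart pi H x).
Let EH h := mean P (H h).
Let Zbar := fine (\int[pi]_h (expR (EH h))%:E).

Let Z_gt0 x : 0 < Z x. Proof. exact: fine_gt0 (Z_bounds x). Qed.

Let ZpartE x : Zpart pi H x = (Z x)%:E.
Proof. by have /andP[Z0 Zfin] := Z_bounds x; rewrite fineK // ge0_fin_numE // ltW. Qed.

Let Zbar_gt0 : 0 < Zbar. Proof. exact: fine_gt0 Zbar_bounds. Qed.

Let ZbarE : (\int[pi]_h (expR (EH h))%:E)%E = Zbar%:E.
Proof. by have /andP[Z0 Zfin] := Zbar_bounds; rewrite fineK // ge0_fin_numE // ltW. Qed.

Let measurable_H h : measurable_fun setT (H h).
Proof. by have /measurable_int/measurable_EFinP := iH h. Qed.

Let measurable_H_at x : measurable_fun setT (fun h => H h x).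
Proof. exact: (measurable_fun_pair1 (f := fun z : Hs * T => H z.1 z.2) x mH). Qed.

Let measurable_EH : measurable_fun setT EH.
Proof. exact: (measurable_mean_section P mH). Qed.

Let measurable_lnZ : measurable_fun setT (fun x => ln (Z x)).
Proof. by have /measurable_int/measurable_EFinP := ilnZ. Qed.

Let measurable_lnZ_ratio : measurable_fun setT (fun x => ln (Z x / Zbar)).
Proof.
rewrite (_ : (fun x => _) = fun x => ln (Z x) - ln Zbar); first exact: measurable_funB.
by apply: funext => x; rewrite ln_div ?posrE.
Qed.

Let pi_sigma_finite : sigma_finite setT pi.
Proof.
apply: (@sigma_finite_integrable_gt0 _ _ _ pi (fun h => expR (H h point))).
- by move=> h; exact: expR_gt0.
- by apply: measurableT_comp => //; exact: measurable_H_at.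
- by have /andP[] := Z_bounds point.
Qed.

Let tilt q x h := EH h + q * (H h x - EH h).

Let measurable_tilt q :
  measurable_fun setT (fun z : T * Hs => (expR (tilt q z.1 z.2))%:E).
Proof.
apply/measurable_EFinP; apply: measurableT_comp => //.
apply: measurable_funD; first exact: measurableT_comp measurable_EH _.
apply: measurable_funM => //; apply: measurable_funB.
  rewrite (_ : (fun z => H z.2 z.1) = (fun z : Hs * T => H z.1 z.2) \o unstable.swap) //.
  by apply: measurableT_comp => //; exact: measurable_swap.
exact: measurableT_comp measurable_EH _.
Qed.

Let tilt_ge0 q z : (0 <= (expR (tilt q z.1 z.2))%:E)%E.
Proof. by rewrite lee_fin expR_ge0. Qed.

Lemma expectation_tilted_partition_le q :
  (\int[P]_x \int[pi]_h (expR (tilt q x h))%:E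
     <= (expR (q ^+ 2 * sigma ^+ 2 / 2) * Zbar)%:E)%E.
Proof.
have -> : (\int[P]_x \int[pi]_h (expR (tilt q x h))%:E
    = \int[pi]_h \int[P]_x (expR (tilt q x h))%:E)%E.
  exact: (fubini_tonelli (m2 := sigma_finite_measure_of pi_sigma_finite) _
    (measurable_tilt q) (tilt_ge0 q)).
have mexpEH : measurable_fun setT (fun h => (expR (EH h))%:E).
  by apply/measurable_EFinP; exact: measurableT_comp.
rewrite EFinM -ZbarE -ge0_integralZl_EFin ?expR_ge0 //.
apply: ge0_le_integral => //.
- by move=> h _; apply: integral_ge0 => x _; rewrite lee_fin expR_ge0.
- exact: (measurable_fun_fubini_tonelli_G (m1 := P) _ (measurable_tilt q) (tilt_ge0 q)).
- exact: measurable_funeM.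
move=> h _; rewrite [leRHS]muleC.
have -> : (\int[P]_x (expR (tilt q x h))%:E
    = (expR (EH h))%:E * 'E_P[fun x => expR (q * (H h x - EH h))])%E.
  rewrite -expectation_expRD_cst; last first.
    by apply: measurable_funM => //; apply: measurable_funB.
  by rewrite unlock; apply: eq_integral => x _; rewrite /tilt addrC.
by apply: lee_wpmul2l; [rewrite lee_fin expR_ge0 | exact: sgH].
Qed.

Lemma expectation_Z_le :
  (\int[P]_x (Z x)%:E <= (expR (sigma ^+ 2 / 2) * Zbar)%:E)%E.
Proof.
rewrite (_ : \int[P]_x _ = \int[P]_x \int[pi]_h (expR (tilt 1 x h))%:E)%E.
  by have := expectation_tilted_partition_le 1; rewrite expr1n mul1r.
apply: eq_integral => x _; rewrite -ZpartE.
by apply: eq_integral => h _; rewrite /tilt mul1r addrC subrK.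
Qed.

Lemma mean_lnZ_le : mean P (fun x => ln (Z x)) <= ln Zbar + sigma ^+ 2 / 2.
Proof.
have measurable_Z : measurable_fun setT Z.
  rewrite (_ : Z = expR \o (fun x => ln (Z x))); first exact: measurableT_comp.
  by apply: funext => x /=; rewrite lnK // posrE.
have c0 := mulr_gt0 (expR_gt0 (sigma ^+ 2 / 2)) Zbar_gt0.
have := expectation_ln_le (P := P) c0 Z_gt0 measurable_Z ilnZ expectation_Z_le.
by rewrite lnM ?posrE ?expR_gt0 // expRK addrC.
Qed.

Lemma Z_ratio_powN_le q x : 0 <= q ->
  ((Zbar * expR (- q * ln (Z x / Zbar)))%:E
     <= \int[pi]_h (expR (tilt (- q) x h))%:E)%E.
Proof.
move=> q0.
have intV : (\int[pi]_h (expR (EH h) * expR (H h x - EH h))%:E)%E = (Z x)%:E.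
  by rewrite -ZpartE; apply: eq_integral => h _; rewrite -expRD addrC subrK.
have mg : measurable_fun setT (fun h => H h x - EH h) by exact: measurable_funB.
have := jensen_expR_powN q0 Zbar_gt0 (Z_gt0 x) (fun h => expR_ge0 (EH h))
  (measurableT_comp (@measurable_expR R) measurable_EH) mg ZbarE intV.
by under eq_integral => h _ do rewrite -expRD.
Qed.

Lemma expectation_Z_ratio_powN_le q : 0 <= q ->
  ('E_P[fun x => expR (- q * ln (Z x / Zbar))]
     <= (expR (q ^+ 2 * sigma ^+ 2 / 2))%:E)%E.
Proof.
move=> q0.
have measurable_Z_ratio_powN : measurable_fun setT (fun x => (expR (- q * ln (Z x / Zbar)))%:E).
  by apply/measurable_EFinP; apply: measurableT_comp => //; exact: measurable_funM.
have measurable_tilted_Z : measurable_fun setT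
    (fun x => \int[pi]_h (expR (tilt (- q) x h))%:E)%E.
  exact: (measurable_fun_fubini_tonelli_F
    (m2 := sigma_finite_measure_of pi_sigma_finite) _ (measurable_tilt (- q))
    (tilt_ge0 (- q))).
rewrite -(@lee_pmul2l _ Zbar%:E) ?lte_fin // [leRHS]muleC -EFinM.
have := expectation_tilted_partition_le (- q); rewrite sqrrN => tilted_le.
apply: (le_trans _ tilted_le).
rewrite unlock -ge0_integralZl_EFin //; last exact: ltW.
apply: ge0_le_integral => //.
- by move=> x _; rewrite -EFinM lee_fin mulr_ge0 ?expR_ge0 // ltW.
- exact: measurable_funeM.
by move=> x _; rewrite -EFinM; exact: Z_ratio_powN_le.
Qed.

Lemma expectation_lnZ_centered_le q : 0 <= q ->
  ('E_P[fun x => expR (q * (- ln (Z x) + mean P (fun x => ln (Z x))))]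
     <= (expR (q ^+ 2 * sigma ^+ 2 / 2 + q * (sigma ^+ 2 / 2)))%:E)%E.
Proof.
move=> q0; set L := mean P _.
have -> : (fun x => expR (q * (- ln (Z x) + L)))
    = fun x => expR (- q * ln (Z x / Zbar) + q * (L - ln Zbar)).
  by apply: funext => x; rewrite ln_div ?posrE //; congr expR; ring.
rewrite expectation_expRD_cst; last exact: measurable_funM.
apply: le_trans (lee_wpmul2l _ (expectation_Z_ratio_powN_le q0)) _.
  by rewrite lee_fin expR_ge0.
rewrite -EFinM lee_fin -expRD ler_expR addrC lerD2l.
by apply: ler_wpM2l => //; have := mean_lnZ_le; rewrite -/L; lra.
Qed.

Lemma expectation_f_lnZ_centered_le p (f : T -> R) rho :
  1 <= p -> 0 < rho -> 0 < sigma ->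
  P.-integrable setT (fun x => (f x)%:E) -> subgaussian P f rho ->
  ('E_P[fun x => expR (p * (f x - mean P f - ln (Z x) + mean P (fun x => ln (Z x))))]
     <= (expR (p ^+ 2 * (rho + sigma) ^+ 2))%:E)%E.
Proof.
move=> p1 rho0 sigma0 iF sgF.
have mf : measurable_fun setT f by have /measurable_int/measurable_EFinP := iF.
set L := mean P (fun x => ln (Z x)); set Ef := mean P f.
have rs0 : 0 < rho + sigma by rewrite addr_gt0.
pose t := rho / (rho + sigma).
pose a := p * (rho + sigma) / rho.
pose b := p * (rho + sigma) / sigma.
have t0 : 0 <= t by rewrite divr_ge0 ?ltW.
have t1 : t <= 1 by rewrite ler_pdivrMr // mul1r lerDl ltW.
have b0 : 0 <= b by rewrite divr_ge0 ?mulr_ge0 ?ltW //; lra.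
have -> : (fun x => expR (p * (f x - Ef - ln (Z x) + L))) = fun x =>
    expR (t * (a * (f x - Ef)) + (1 - t) * (b * (- ln (Z x) + L))).
  by apply: funext => x; congr expR; rewrite /t /a /b; field; rewrite !gt_eqF.
apply: le_trans (expectation_expR_mix_le (U := fun x => a * (f x - Ef))
  (V := fun x => b * (- ln (Z x) + L)) t0 t1 _ _ (sgF a)
  (expectation_lnZ_centered_le b0)) _.
- by apply: measurable_funM => //; exact: measurable_funB.
- by apply: measurable_funM => //; apply: measurable_funD => //; exact: measurable_funN.
rewrite lee_fin ler_expR.
have -> : t * (a ^+ 2 * rho ^+ 2 / 2) + (1 - t) * (b ^+ 2 * sigma ^+ 2 / 2 + b * (sigma ^+ 2 / 2))
    = p ^+ 2 * (rho + sigma) ^+ 2 / 2 + p * (sigma ^+ 2 / 2).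
  by rewrite /t /a /b; field; rewrite !gt_eqF.
have : p * sigma ^+ 2 <= p ^+ 2 * sigma ^+ 2.
  by apply: ler_wpM2r; [exact: sqr_ge0 | nra].
have : p ^+ 2 * sigma ^+ 2 <= p ^+ 2 * (rho + sigma) ^+ 2.
  by apply: ler_wpM2l; [exact: sqr_ge0 | nra].
lra.
Qed.

End log_partition_function.

Theorem mainTheorem9 (R : realType) (dX dH : measure_display)
  (X : measurableType dX) (mu : probability X R) (n : nat)
  (P : probability (n.-tuple X) R) (Hs : measurableType dH)
  (pi : {measure set Hs -> \bar R}) (H : Hs -> n.-tuple X -> R)
  (p sigma : R) :
  is_product_prob mu P ->
  1 <= p -> 0 < sigma ->
  measurable_fun setT (fun z : Hs * n.-tuple X => H z.1 z.2) ->
  (forall h, P.-integrable setT (fun x => (H h x)%:E)) ->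
  (forall h, subgaussian P (H h) sigma) ->
  (forall x, (0 < Zpart pi H x < +oo)%E) ->
  (0 < \int[pi]_h (expR (mean P (H h)))%:E < +oo)%E ->
  P.-integrable setT (fun x => (ln (fine (Zpart pi H x)))%:E) ->
  (* (i) *)
  ('E_P[fun x => expR (p * (- ln (fine (Zpart pi H x))
                           + mean P (fun x' => ln (fine (Zpart pi H x')))))]
     <= (expR (p ^+ 2 * sigma ^+ 2))%:E)%E
  /\
  (* (ii) *)
  (forall (f : n.-tuple X -> R) (rho : R), 0 <= rho ->
    P.-integrable setT (fun x => (f x)%:E) ->
    subgaussian P f rho ->
    ('E_P[fun x => expR (p * (f x - mean P f
                              - ln (fine (Zpart pi H x))
                              + mean P (fun x' => ln (fine (Zpart pi H x')))))]
       <= (expR (p ^+ 2 * (rho + sigma) ^+ 2))%:E)%E).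
Proof.
move=> _ p1 sigma0 mH iH sgH Z_bounds Zbar_bounds ilnZ.
have p0 : 0 <= p by lra.
split.
  apply: le_trans (expectation_lnZ_centered_le mH iH sgH Z_bounds Zbar_bounds ilnZ p0) _.
  by rewrite lee_fin ler_expR; nra.
move=> f rho rho0 iF sgF.
apply: lee_expR_sqr_shift => [||r r0]; [nra | lra |].
rewrite addrA; apply: expectation_f_lnZ_centered_le => //; first lra.
by apply: subgaussian_le sgF => //; lra.
Qed.
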